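(* Let $\mathrm{E}$ be the equation $l\simeq r$ with $l\in M_X$ not a variable, and let $R\colon M_X\to M_X$ be weakly collapsing, a weak canonizer for $\mathrm{E}$, and non-overlapping for $\mathrm{E}$. Then for all words $w,w'\in M_X$ with $w\sim_{\mathrm{E}}w'$ one has $C_R(w)=C_R(w')$.
   Context: $M_X$ is the set of words of the free magma on alphabet $X$. For words $w,w'$, $w\sim_{\mathrm{E}}w'$ means the law $w\simeq w'$ is a consequence of $\mathrm{E}$ (every magma satisfying $\mathrm{E}$ satisfies $w\simeq w'$); equivalently, $w'$ is obtained from $w$ by finitely many replacements of a subword of the form $\varphi_\theta l$ by $\varphi_\theta r$ or vice versa. A substitution is a map $\theta\colon X\to M_X$, and $\varphi_\theta$ its extension to a magma endomorphism of $M_X$. A subword of $w$ is a subterm of $w$ (including $w$); a strict subword is one different from $w$. $R$ is weakly collapsing if $R(w)$ is a subword of $w$ for every $w$; $R$ is a weak canonizer for $\mathrm{E}$ if $R(\varphi_\theta l)=\varphi_\theta r$ for every substitution $\theta$; $R$ is non-overlapping for $\mathrm{E}$ if $R(\varphi_\theta w)=\varphi_\theta w$ for every substitution $\theta$ and every strict subword $w$ of $l$ that is not a variable. The map $C_R$ is defined by $C_R(x)=x$ for $x\in X$ and $C_R(w\diamond w')=R(C_R(w)\diamond C_R(w'))$. *)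

From Stdlib Require Import Relations.

Set Implicit Arguments.

Inductive word (X : Type) : Type :=
| Var : X -> word X
| Op : word X -> word X -> word X.

Arguments Var {X} _.
Arguments Op {X} _ _.

Fixpoint subst {X : Type} (theta : X -> word X) (w : word X) : word X :=
  match w with
  | Var x => theta x
  | Op w1 w2 => Op (subst theta w1) (subst theta w2)
  end.

Inductive subword {X : Type} : word X -> word X -> Prop :=
| sub_refl : forall w, subword w w
| sub_left : forall u w1 w2, subword u w1 -> subword u (Op w1 w2)
| sub_right : forall u w1 w2, subword u w2 -> subword u (Op w1 w2).

Definition is_var {X : Type} (w : word X) : Prop :=
  exists x, w = Var x.

Inductive step {X : Type} (l r : word X) : word X -> word X -> Prop :=
| step_root : forall theta, step l r (subst theta l) (subst theta r)
| step_left : forall w1 w1' w2, step l r w1 w1' -> step l r (Op w1 w2) (Op w1' w2)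
| step_right : forall w1 w2 w2', step l r w2 w2' -> step l r (Op w1 w2) (Op w1 w2').

Definition equiv_E {X : Type} (l r : word X) : word X -> word X -> Prop :=
  clos_refl_sym_trans (word X) (step l r).

Definition weakly_collapsing {X : Type} (R : word X -> word X) : Prop :=
  forall w, subword (R w) w.

Definition weak_canonizer {X : Type} (l r : word X) (R : word X -> word X) : Prop :=
  forall theta : X -> word X, R (subst theta l) = subst theta r.

Definition non_overlapping {X : Type} (l : word X) (R : word X -> word X) : Prop :=
  forall (theta : X -> word X) (w : word X),
    subword w l -> w <> l -> ~ is_var w -> R (subst theta w) = subst theta w.

Fixpoint C_R {X : Type} (R : word X -> word X) (w : word X) : word X :=
  match w with
  | Var x => Var x
  | Op w1 w2 => R (Op (C_R R w1) (C_R R w2))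
  end.

(* Since R is weakly collapsing, C_R never increases the size of a word, so a
   C_R-normal word has only C_R-normal subwords and C_R is idempotent; hence
   C_R (phi_theta w) only depends on the normal forms of the theta x.  By
   non-overlapping, C_R (phi_theta u) = phi_{C_R o theta} u for every strict
   subword u of l, so the weak canonizer gives
   C_R (phi_theta l) = phi_{C_R o theta} r, and applying C_R once more yields
   C_R (phi_theta l) = C_R (phi_theta r).  C_R is a congruence, so it is
   invariant under rewriting steps and thus under ~_E. *)

From Stdlib Require Import Lia.

Fixpoint wsize {X : Type} (w : word X) : nat :=
  match w with
  | Var _ => 1
  | Op w1 w2 => S (wsize w1 + wsize w2)
  end.

Lemma subword_size {X : Type} {u w : word X} : subword u w -> wsize u <= wsize w.
Proof. induction 1; simpl; lia. Qed.

Lemma subword_size_eq {X : Type} (u w : word X) :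
  subword u w -> wsize u = wsize w -> u = w.
Proof.
  intros Hs Hsize; destruct Hs as [| u w1 w2 Hs | u w1 w2 Hs]; [reflexivity | |];
    apply subword_size in Hs; simpl in Hsize; lia.
Qed.

Lemma subword_Op_inv {X : Type} {u w1 w2 : word X} :
  subword u (Op w1 w2) -> u = Op w1 w2 \/ subword u w1 \/ subword u w2.
Proof. inversion 1; auto. Qed.

Lemma subword_trans {X : Type} (u v w : word X) :
  subword u v -> subword v w -> subword u w.
Proof. intros Huv Hvw; induction Hvw; auto using subword. Qed.

Lemma subst_ext {X : Type} (theta theta' : X -> word X) (w : word X) :
  (forall x, theta x = theta' x) -> subst theta w = subst theta' w.
Proof. intros E; induction w; simpl; congruence. Qed.

Section Normalization.

Variables (X : Type) (R : word X -> word X).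
Hypothesis R_collapsing : weakly_collapsing R.

Lemma C_R_size (w : word X) : wsize (C_R R w) <= wsize w.
Proof.
  induction w as [x | w1 IH1 w2 IH2]; simpl; [lia |].
  pose proof (subword_size (R_collapsing (Op (C_R R w1) (C_R R w2)))).
  simpl in *; lia.
Qed.

Lemma C_R_fixed_Op {w1 w2 : word X} :
  C_R R (Op w1 w2) = Op w1 w2 -> C_R R w1 = w1 /\ C_R R w2 = w2.
Proof.
  simpl; intros Hfix.
  pose proof (R_collapsing (Op (C_R R w1) (C_R R w2))) as Hsub.
  rewrite Hfix in Hsub.
  pose proof (subword_size Hsub); pose proof (C_R_size w1); pose proof (C_R_size w2).
  apply subword_size_eq in Hsub; [| simpl in *; lia].
  injection Hsub; auto.
Qed.

Lemma C_R_fixed_subword {u w : word X} :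
  C_R R w = w -> subword u w -> C_R R u = u.
Proof.
  intros Hfix Hsub; induction Hsub; auto;
    apply IHHsub; apply C_R_fixed_Op in Hfix; tauto.
Qed.

Lemma C_R_idem (w : word X) : C_R R (C_R R w) = C_R R w.
Proof.
  induction w as [x | w1 IH1 w2 IH2]; [reflexivity |]; simpl.
  destruct (subword_Op_inv (R_collapsing (Op (C_R R w1) (C_R R w2))))
    as [Heq | [Hsub | Hsub]].
  - rewrite Heq at 1; simpl; rewrite IH1, IH2; reflexivity.
  - exact (C_R_fixed_subword IH1 Hsub).
  - exact (C_R_fixed_subword IH2 Hsub).
Qed.

Lemma C_R_subst (theta : X -> word X) (w : word X) :
  C_R R (subst theta w) = C_R R (subst (fun x => C_R R (theta x)) w).
Proof.
  induction w as [x | w1 IH1 w2 IH2]; simpl; [symmetry; apply C_R_idem | congruence].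
Qed.

Variables l r : word X.
Hypotheses (l_not_var : ~ is_var l)
  (R_canonizer : weak_canonizer l r R) (R_non_overlapping : non_overlapping l R).

Lemma C_R_subst_strict_subword (theta : X -> word X) (u : word X) :
  subword u l -> wsize u < wsize l ->
  C_R R (subst theta u) = subst (fun x => C_R R (theta x)) u.
Proof.
  induction u as [x | u1 IH1 u2 IH2]; intros Hsub Hsize; [reflexivity |]; simpl in *.
  rewrite IH1, IH2 by first [lia | eauto using subword_trans, subword].
  apply (R_non_overlapping _ (Op u1 u2) Hsub).
  - intros E; rewrite <- E in Hsize; simpl in Hsize; lia.
  - intros [x E]; discriminate.
Qed.

Lemma C_R_subst_lhs (theta : X -> word X) :
  C_R R (subst theta l) = subst (fun x => C_R R (theta x)) r.
Proof.
  assert (Hop : exists l1 l2, l = Op l1 l2).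
  { destruct l as [x | l1 l2]; [exfalso; apply l_not_var; now exists x | eauto]. }
  destruct Hop as (l1 & l2 & El).
  rewrite <- R_canonizer, El; simpl.
  rewrite !C_R_subst_strict_subword; rewrite ?El; simpl; first [lia | auto using subword].
Qed.

Lemma C_R_subst_lhs_rhs (theta : X -> word X) :
  C_R R (subst theta l) = C_R R (subst theta r).
Proof.
  set (theta' := fun x => C_R R (theta x)).
  assert (Htheta' : forall x, C_R R (theta' x) = theta' x) by (intro; apply C_R_idem).
  assert (Hlhs := C_R_subst_lhs theta').
  rewrite (subst_ext _ _ r Htheta') in Hlhs.
  rewrite C_R_subst_lhs, (C_R_subst theta r); fold theta'.
  rewrite <- Hlhs; symmetry; apply C_R_idem.
Qed.

Lemma C_R_step (w w' : word X) : step l r w w' -> C_R R w = C_R R w'.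
Proof. induction 1; simpl; [apply C_R_subst_lhs_rhs | congruence | congruence]. Qed.

End Normalization.

Theorem mainTheorem8 (X : Type) (l r : word X) (R : word X -> word X) :
  ~ is_var l ->
  weakly_collapsing R ->
  weak_canonizer l r R ->
  non_overlapping l R ->
  forall w w' : word X, equiv_E l r w w' -> C_R R w = C_R R w'.
Proof.
  intros l_not_var R_collapsing R_canonizer R_non_overlapping w w' Hequiv.
  induction Hequiv; [eapply C_R_step; eauto | reflexivity | congruence | congruence].
Qed.
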